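(* Let $T>0$, $q>0$, $\eta>0$, $c>0$, $k\ge0$, and let $\lambda:[0,T]\to(0,\infty)$ be non-decreasing and continuously differentiable with $\lambda(0)=1$. There exists a constant $C>0$ depending only on $\lambda$, $c$, $q$ and $\eta$ such that, if $k>\max(4C^2,1)$, the equation $$\partial_t\Lambda(\tau;t)-2k\Lambda(\tau;t)+2\lambda(t-\tau)\Big(\Lambda(t;t)+\frac q2\Big)^2-4\Big(\Lambda(\tau;t)+\frac q2\lambda(t-\tau)\Big)\Big(\Lambda(t;t)+\frac q2\Big)+\frac\eta2\lambda(t-\tau)=0,\qquad \Lambda(\tau;T)=\frac c2\lambda(T-\tau),$$ for $0\le\tau\le t\le T$, admits a unique (continuous, real-valued) solution $\Lambda$ on $\{(\tau,t):0\le\tau\le t\le T\}$. *)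

From Stdlib Require Import Reals.
From Coquelicot Require Import Coquelicot.
Open Scope R_scope.

Definition cont_within_interval (f : R -> R) (a b x : R) : Prop :=
  filterlim f (within (fun y => a <= y <= b) (locally x)) (locally (f x)).

(* f is continuously differentiable on the closed interval [a,b]:
   continuous on [a,b], differentiable on (a,b), and its derivative
   extends continuously to [a,b] (equivalently: one-sided derivatives at
   the endpoints, derivative continuous on [a,b]). *)
Definition C1_on (f : R -> R) (a b : R) : Prop :=
  exists f' : R -> R,
    (forall x, a <= x <= b -> cont_within_interval f a b x) /\
    (forall x, a < x < b -> is_derive f x (f' x)) /\
    (forall x, a <= x <= b -> cont_within_interval f' a b x).

Definition sol_domain (T : R) (p : (R * R)%type) : Prop :=
  0 <= fst p /\ fst p <= snd p /\ snd p <= T.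

(* Lam (tau;t) is written Lam tau t.  A solution of the equation of Lemma 4.1:
   - continuous (real valued) on the closed triangle;
   - for each tau, t |-> Lam tau t is differentiable on (tau,T) and the
     equation holds there (by continuity on the closed triangle this is the
     usual meaning of the ODE on [tau,T]);
   - terminal condition Lam tau T = c/2 * lam (T - tau). *)
Definition is_solution (T q eta c k : R) (lam : R -> R) (Lam : R -> R -> R) : Prop :=
  (forall tau t, sol_domain T (pair tau t) ->
     filterlim (fun p : (R * R)%type => Lam (fst p) (snd p))
       (within (sol_domain T) (locally (pair tau t))) (locally (Lam tau t))) /\
  (forall tau t, 0 <= tau -> tau < t -> t < T ->
     exists d : R, is_derive (fun s => Lam tau s) t d /\
       d - 2 * k * Lam tau t
       + 2 * lam (t - tau) * (Lam t t + q / 2) ^ 2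
       - 4 * (Lam tau t + q / 2 * lam (t - tau)) * (Lam t t + q / 2)
       + eta / 2 * lam (t - tau) = 0) /\
  (forall tau, 0 <= tau <= T -> Lam tau T = c / 2 * lam (T - tau)).

From Stdlib Require Import Reals.
From Coquelicot Require Import Coquelicot.
From Stdlib Require Import Lra Psatz FunctionalExtensionality.
Open Scope R_scope.

(* Write [u t = Lambda(t;t) + q/2] and [F x = 2 x^2 - 2 q x + eta/2].  The equation becomes
   [d/dt Lambda(tau;t) = (2 k + 4 u t) Lambda(tau;t) - lambda(t - tau) F (u t)], which is linear
   once [u] is fixed; with the terminal condition it is solved by variation of constants, giving
   [Lambda_u].  Solutions thus correspond to continuous fixed points of
   [u |-> q/2 + Lambda_u(t;t)].
   For [k] large the propagator [exp (- int_t^s (2 k + 4 u))] decays like [exp (- k (s - t))] on a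
   sup-norm ball of radius [B], so this map preserves the ball and halves distances in it; its
   iterates converge uniformly to a fixed point.  Conversely the diagonal of any solution is a
   fixed point, and for every [k >= 0] the map satisfies [|Phi u t - Phi v t| <= K int_t^T |u - v|]
   on bounded sets, so two continuous fixed points coincide by a backward Gronwall argument. *)

(** * Continuous functions on the real line *)

(* Functions given on [[a, b]] are extended to [R] by [f (clamp a b x)], so that continuity,
   integrals and derivatives can be handled with everywhere continuous functions. *)
Definition clamp (a b x : R) : R := Rmax a (Rmin b x).

Lemma clamp_lip a b x y : Rabs (clamp a b x - clamp a b y) <= Rabs (x - y).
Proof.
  unfold clamp, Rmax, Rmin; repeat destruct Rle_dec;
    unfold Rabs; repeat destruct Rcase_abs; lra.
Qed.

Section Clamp.
Variables a b : R.
Hypothesis Hab : a <= b.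

Lemma clamp_in x : a <= clamp a b x <= b.
Proof. unfold clamp, Rmax, Rmin; repeat destruct Rle_dec; lra. Qed.

Lemma clamp_id x : a <= x <= b -> clamp a b x = x.
Proof. unfold clamp, Rmax, Rmin; repeat destruct Rle_dec; lra. Qed.

Lemma clamp_idem x : clamp a b (clamp a b x) = clamp a b x.
Proof. exact (clamp_id _ (clamp_in x)). Qed.

End Clamp.

Definition continuous_R (f : R -> R) : Prop := forall x, continuous f x.

Lemma continuous_R_const a : continuous_R (fun _ => a).
Proof. intros x; apply continuous_const. Qed.

Lemma continuous_R_id : continuous_R (fun x => x).
Proof. intros x; apply continuous_id. Qed.

Lemma continuous_R_plus f g :
  continuous_R f -> continuous_R g -> continuous_R (fun x => f x + g x).
Proof. intros Hf Hg x; apply (continuous_plus f g); auto. Qed.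

Lemma continuous_R_opp f : continuous_R f -> continuous_R (fun x => - f x).
Proof. intros Hf x; apply (continuous_opp f); auto. Qed.

Lemma continuous_R_minus f g :
  continuous_R f -> continuous_R g -> continuous_R (fun x => f x - g x).
Proof. intros Hf Hg; apply continuous_R_plus, continuous_R_opp; auto. Qed.

Lemma continuous_R_mult f g :
  continuous_R f -> continuous_R g -> continuous_R (fun x => f x * g x).
Proof. intros Hf Hg x; apply (continuous_mult f g); auto. Qed.

Lemma continuous_R_comp f g :
  continuous_R f -> continuous_R g -> continuous_R (fun x => g (f x)).
Proof. intros Hf Hg x; apply (continuous_comp f g); auto. Qed.

Lemma continuous_R_exp : continuous_R exp.
Proof.
  intros x; apply (ex_derive_continuous (V := R_NormedModule)).
  exists (exp x); apply is_derive_exp.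
Qed.

Lemma continuous_R_of_lip f : (forall x y, Rabs (f x - f y) <= Rabs (x - y)) ->
  continuous_R f.
Proof.
  intros Hf x; apply filterlim_locally; intros eps.
  exists eps; intros y Hy; exact (Rle_lt_trans _ _ _ (Hf y x) Hy).
Qed.

Lemma continuous_R_abs : continuous_R Rabs.
Proof. apply continuous_R_of_lip; intros; apply Rabs_triang_inv2. Qed.

Lemma continuous_R_clamp a b : continuous_R (clamp a b).
Proof. apply continuous_R_of_lip, clamp_lip. Qed.

Lemma continuity_pt_of_continuous_R f x : continuous_R f -> continuity_pt f x.
Proof. intros Hf; apply continuity_pt_filterlim, Hf. Qed.

Create HintDb continuity_R.

Ltac continuity_R :=
  repeat match goal with
  | H : continuous_R ?f |- continuous_R ?f => exact H
  | |- continuous_R (fun _ => _) => apply continuous_R_const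
  | |- continuous_R (fun x => x) => apply continuous_R_id
  | |- continuous_R exp => apply continuous_R_exp
  | |- continuous_R Rabs => apply continuous_R_abs
  | |- continuous_R (clamp _ _) => apply continuous_R_clamp
  | |- continuous_R (fun x => @?f x + @?g x) => apply (continuous_R_plus f g)
  | |- continuous_R (fun x => @?f x - @?g x) => apply (continuous_R_minus f g)
  | |- continuous_R (fun x => @?f x * @?g x) => apply (continuous_R_mult f g)
  | |- continuous_R (fun x => - @?f x) => apply (continuous_R_opp f)
  | |- continuous_R _ => solve [auto with continuity_R]
  | |- continuous_R (fun x => ?g (@?f x)) => apply (continuous_R_comp f g)
  end.

Lemma filterlim_within_of_range {U V : Type} (F : (U -> Prop) -> Prop) {FF : Filter F}
  (G : (V -> Prop) -> Prop) (D : V -> Prop) (f : U -> V) :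
  filterlim f F G -> (forall x, D (f x)) -> filterlim f F (within D G).
Proof.
  intros Hf HD P HP. specialize (Hf _ HP). unfold filtermap in *.
  apply (filter_imp (fun x => D (f x) -> P (f x))); [|exact Hf].
  intros x H; exact (H (HD x)).
Qed.

Lemma continuous_R_clamp_comp f a b : a <= b ->
  (forall x, a <= x <= b -> cont_within_interval f a b x) ->
  continuous_R (fun x => f (clamp a b x)).
Proof.
  intros Hab Hf x.
  apply (filterlim_comp _ _ _ (clamp a b) f _
           (within (fun y => a <= y <= b) (locally (clamp a b x)))).
  - apply (filterlim_within_of_range (locally x)).
    + apply continuous_R_clamp.
    + intros; apply clamp_in; lra.
  - apply Hf, clamp_in; lra.
Qed.

(** * Integrals and exponential estimates *)

Lemma ex_RInt_continuous_R f a b : continuous_R f -> ex_RInt f a b.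
Proof. intros Hf; apply (ex_RInt_continuous (V := R_CompleteNormedModule)); auto. Qed.

Section Integrals.
Variables f g : R -> R.
Hypotheses (Hf : continuous_R f) (Hg : continuous_R g).

Lemma RInt_Chasles_R a b c : RInt f a b + RInt f b c = RInt f a c.
Proof. apply (RInt_Chasles (V := R_CompleteNormedModule)); apply ex_RInt_continuous_R; auto. Qed.

Lemma RInt_plus_R a b : RInt (fun x => f x + g x) a b = RInt f a b + RInt g a b.
Proof. apply (RInt_plus (V := R_CompleteNormedModule)); apply ex_RInt_continuous_R; auto. Qed.

Lemma RInt_minus_R a b : RInt (fun x => f x - g x) a b = RInt f a b - RInt g a b.
Proof. apply (RInt_minus (V := R_CompleteNormedModule)); apply ex_RInt_continuous_R; auto. Qed.

Lemma RInt_scal_R l a b : RInt (fun x => l * f x) a b = l * RInt f a b.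
Proof. apply (RInt_scal (V := R_CompleteNormedModule)); apply ex_RInt_continuous_R; auto. Qed.

Lemma RInt_le_R a b : a <= b -> (forall x, a <= x <= b -> f x <= g x) ->
  RInt f a b <= RInt g a b.
Proof.
  intros Hab H; apply RInt_le; auto; try apply ex_RInt_continuous_R; auto.
  intros; apply H; lra.
Qed.

Lemma RInt_ge_0_R a b : a <= b -> (forall x, a <= x <= b -> 0 <= f x) -> 0 <= RInt f a b.
Proof.
  intros Hab H; apply RInt_ge_0; auto; [apply ex_RInt_continuous_R; auto|].
  intros; apply H; lra.
Qed.

Lemma abs_RInt_le_R a b : a <= b -> Rabs (RInt f a b) <= RInt (fun x => Rabs (f x)) a b.
Proof. intros Hab; apply abs_RInt_le; auto; apply ex_RInt_continuous_R; auto. Qed.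

Lemma abs_RInt_le_dist a b M :
  (forall x, Rmin a b <= x <= Rmax a b -> Rabs (f x) <= M) ->
  Rabs (RInt f a b) <= Rabs (b - a) * M.
Proof.
  intros HM; destruct (Rle_dec a b).
  - rewrite Rmin_left, Rmax_right in HM by lra. rewrite (Rabs_right (b - a)) by lra.
    apply abs_RInt_le_const; [lra | apply ex_RInt_continuous_R; auto | exact HM].
  - rewrite Rmin_right, Rmax_left in HM by lra. rewrite (Rabs_left (b - a)), Ropp_minus_distr by lra.
    rewrite <- (opp_RInt_swap (V := R_CompleteNormedModule)) by (apply ex_RInt_continuous_R; auto).
    rewrite Rabs_Ropp; apply abs_RInt_le_const; auto; try lra; apply ex_RInt_continuous_R; auto.
Qed.

Lemma is_derive_RInt_lower a t : is_derive (fun x => RInt f a x) t (f t).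
Proof.
  apply (is_derive_RInt (V := R_CompleteNormedModule)) with (a := a); [|apply Hf].
  apply filter_forall; intros b.
  apply (RInt_correct (V := R_CompleteNormedModule)), ex_RInt_continuous_R; auto.
Qed.

Lemma is_derive_RInt_upper b t : is_derive (fun x => RInt f x b) t (- f t).
Proof.
  apply (is_derive_ext (fun x => RInt f 0 b - RInt f 0 x)).
  { intros x; simpl. rewrite <- (RInt_Chasles_R 0 x b). ring. }
  replace (- f t) with (0 - f t) by ring.
  apply (is_derive_minus (fun _ => RInt f 0 b) (fun x => RInt f 0 x)).
  - apply (is_derive_const (K := R_AbsRing) (V := R_NormedModule)).
  - apply is_derive_RInt_lower.
Qed.

End Integrals.

Lemma RInt_const_R a b v : RInt (fun _ => v) a b = (b - a) * v.
Proof. exact (RInt_const (V := R_CompleteNormedModule) a b v). Qed.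

Lemma exp_le_exp_of_le x y : x <= y -> exp x <= exp y.
Proof. intros H; destruct (Req_dec x y) as [->|]; [lra | left; apply exp_increasing; lra]. Qed.

Lemma exp_decay_mul_le k x : 0 < k -> 0 <= x -> exp (- k * x) * x <= / k.
Proof.
  intros Hk Hx. assert (H := exp_ineq1_le (k * x)).
  assert (E : exp (- k * x) = / exp (k * x)) by (rewrite <- exp_Ropp; f_equal; ring).
  rewrite E. assert (0 < exp (k * x)) by apply exp_pos.
  apply (Rmult_le_reg_l (k * exp (k * x))); [nra|].
  field_simplify; lra.
Qed.

Lemma RInt_exp_decay_le k t b : 0 < k -> t <= b ->
  RInt (fun s => exp (- k * (s - t))) t b <= / k.
Proof.
  intros Hk Htb.
  assert (Hi : is_RInt (fun s => exp (- k * (s - t))) t b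
      (minus (- / k * exp (- k * (b - t))) (- / k * exp (- k * (t - t))))).
  { apply (is_RInt_derive (V := R_CompleteNormedModule) (fun s => - / k * exp (- k * (s - t)))).
    - intros x _. auto_derive; auto. field_simplify; [|lra].
      replace (x + - t) with (x - t) by ring. field; lra.
    - intros x _. assert (continuous_R (fun s => exp (- k * (s - t)))) by continuity_R. auto. }
  rewrite (is_RInt_unique _ _ _ _ Hi). unfold minus, plus, opp; simpl.
  replace (t - t) with 0 by ring. rewrite Rmult_0_r, exp_0.
  assert (0 < exp (- k * (b - t))) by apply exp_pos.
  assert (0 < / k) by (apply Rinv_0_lt_compat; lra). nra.
Qed.

Lemma Rabs_exp_opp_diff_le a b m : m <= a -> m <= b ->
  Rabs (exp (- a) - exp (- b)) <= exp (- m) * Rabs (a - b).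
Proof.
  assert (G : forall a b, m <= a -> a <= b ->
    Rabs (exp (- a) - exp (- b)) <= exp (- m) * Rabs (a - b)).
  { intros x y Hx Hxy.
    assert (E : exp (- y) = exp (- x) * exp (- (y - x))) by (rewrite <- exp_plus; f_equal; ring).
    assert (H1 := exp_ineq1_le (- (y - x))).
    assert (H2 : exp (- y) <= exp (- x)) by (apply exp_le_exp_of_le; lra).
    assert (H3 : exp (- x) <= exp (- m)) by (apply exp_le_exp_of_le; lra).
    assert (H4 := exp_pos (- x)).
    rewrite Rabs_right, (Rabs_left1 (x - y)) by lra. rewrite E in *. nra. }
  intros Ha Hb; destruct (Rle_dec a b); [apply G; auto|].
  rewrite Rabs_minus_sym, (Rabs_minus_sym a b); apply G; lra.
Qed.

Lemma Rabs_weighted_diff_le pu pv y fu fv Ly Fb E W :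
  Rabs (pu - pv) <= E -> 0 <= pv <= W -> 0 <= y <= Ly -> Rabs fu <= Fb ->
  Rabs (pu * (y * fu) - pv * (y * fv)) <= E * (Ly * Fb) + W * (Ly * Rabs (fu - fv)).
Proof.
  intros HE Hpv Hy Hfu.
  replace (pu * (y * fu) - pv * (y * fv)) with ((pu - pv) * (y * fu) + pv * (y * (fu - fv)))
    by ring.
  eapply Rle_trans; [apply Rabs_triang|]. rewrite !Rabs_mult, (Rabs_right y), (Rabs_right pv) by lra.
  assert (H1 := Rabs_pos (pu - pv)). assert (H2 := Rabs_pos fu). assert (H3 := Rabs_pos (fu - fv)).
  apply Rplus_le_compat; apply Rmult_le_compat; try apply Rmult_le_compat; try nra.
Qed.

(** * Contractions in the sup norm *)

Lemma half_pow_lt y : 0 < y -> exists n, (/ 2) ^ n < y.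
Proof.
  intros Hy. destruct (pow_lt_1_zero (/ 2) ltac:(rewrite Rabs_right; lra) y Hy) as [N HN].
  exists N. specialize (HN N (le_n N)).
  rewrite Rabs_right in HN; [exact HN | left; apply pow_lt; lra].
Qed.

Lemma Rle_of_le_add_half_pow x y C : (forall n, x <= y + C * (/ 2) ^ n) -> x <= y.
Proof.
  intros H. apply Rnot_lt_le; intros Hxy.
  assert (HC : 0 < C) by (specialize (H 0%nat); simpl in H; lra).
  destruct (half_pow_lt ((x - y) / C)) as [n Hn]; [apply Rdiv_lt_0_compat; lra|].
  specialize (H n). apply (Rmult_lt_compat_l C) in Hn; [|exact HC].
  replace (C * ((x - y) / C)) with (x - y) in Hn by (field; lra). lra.
Qed.

Section GeometricIncrements.
Variables (a : nat -> R) (D : R).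
Hypothesis Ha : forall n, Rabs (a (S n) - a n) <= D * (/ 2) ^ n.

Lemma geometric_increments_bound_nonneg : 0 <= D.
Proof.
  assert (H := Ha 0%nat). rewrite pow_O, Rmult_1_r in H.
  assert (H0 := Rabs_pos (a 1%nat - a 0%nat)). lra.
Qed.

Lemma geometric_increments_tail n p : Rabs (a (p + n)%nat - a n) <= 2 * D * (/ 2) ^ n.
Proof.
  assert (Hp : 0 < (/ 2) ^ p) by (apply pow_lt; lra).
  enough (Rabs (a (p + n)%nat - a n) <= 2 * D * (/ 2) ^ n * (1 - (/ 2) ^ p)).
  { assert (HD := geometric_increments_bound_nonneg).
    assert (0 < (/ 2) ^ n) by (apply pow_lt; lra).
    assert (0 <= 2 * D * (/ 2) ^ n * (/ 2) ^ p) by (apply Rmult_le_pos; nra). nra. }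
  induction p as [|p IH].
  - simpl. rewrite Rminus_diag, Rabs_R0. lra.
  - replace (a (S p + n)%nat - a n)
      with ((a (S (p + n)) - a (p + n)%nat) + (a (p + n)%nat - a n)) by (simpl; ring).
    eapply Rle_trans; [apply Rabs_triang|].
    assert (IH' := IH ltac:(apply pow_lt; lra)).
    assert (H := Ha (p + n)). rewrite pow_add in H. simpl. nra.
Qed.

Lemma Lim_seq_geometric_error n : Rabs (real (Lim_seq a) - a n) <= 2 * D * (/ 2) ^ n.
Proof.
  assert (Hcauchy : ex_lim_seq_cauchy a).
  { intros eps. assert (HD := geometric_increments_bound_nonneg).
    destruct (half_pow_lt (eps / (4 * D + 1))) as [N HN].
    { apply Rdiv_lt_0_compat; [apply cond_pos | lra]. }
    exists N. intros m p Hm Hp.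
    assert (Bm := geometric_increments_tail N (m - N)).
    assert (Bp := geometric_increments_tail N (p - N)).
    replace (m - N + N)%nat with m in Bm by lia. replace (p - N + N)%nat with p in Bp by lia.
    apply (Rmult_lt_compat_l (4 * D + 1)) in HN; [|lra].
    replace ((4 * D + 1) * (eps / (4 * D + 1))) with (pos eps) in HN by (field; lra).
    assert (0 < (/ 2) ^ N) by (apply pow_lt; lra).
    replace (a m - a p) with ((a m - a N) - (a p - a N)) by ring.
    eapply Rle_lt_trans; [apply Rabs_triang|]. rewrite Rabs_Ropp. nra. }
  apply ex_lim_seq_cauchy_corr in Hcauchy. destruct Hcauchy as [l Hl].
  rewrite (is_lim_seq_unique _ _ Hl). simpl.
  apply is_lim_seq_incr_n with (N := n) in Hl.
  assert (Htail : forall p, a n - 2 * D * (/ 2) ^ n <= a (p + n)%nat <= a n + 2 * D * (/ 2) ^ n).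
  { intros p. assert (H := geometric_increments_tail n p). apply Rabs_le_between in H. lra. }
  assert (Lo : Rbar_le (a n - 2 * D * (/ 2) ^ n) l).
  { apply (is_lim_seq_le (fun _ => a n - 2 * D * (/ 2) ^ n) (fun p => a (p + n)%nat));
      [intros p; apply Htail | apply is_lim_seq_const | exact Hl]. }
  assert (Hi : Rbar_le l (a n + 2 * D * (/ 2) ^ n)).
  { apply (is_lim_seq_le (fun p => a (p + n)%nat) (fun _ => a n + 2 * D * (/ 2) ^ n));
      [intros p; apply Htail | exact Hl | apply is_lim_seq_const]. }
  simpl in Lo, Hi. apply Rabs_le_between. lra.
Qed.

End GeometricIncrements.

Lemma continuous_R_geometric_limit (f : nat -> R -> R) g C :
  (forall n, continuous_R (f n)) -> (forall n x, Rabs (g x - f n x) <= C * (/ 2) ^ n) ->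
  continuous_R g.
Proof.
  intros Hf Hg x. apply filterlim_locally; intros eps.
  assert (HC : 0 <= C) by (specialize (Hg 0%nat x); simpl in Hg;
                           assert (H0 := Rabs_pos (g x - f 0%nat x)); lra).
  destruct (half_pow_lt (eps / (3 * (C + 1)))) as [n Hn].
  { apply Rdiv_lt_0_compat; [apply cond_pos | lra]. }
  assert (Hsmall : C * (/ 2) ^ n < eps / 3).
  { apply (Rmult_lt_compat_l (C + 1)) in Hn; [|lra].
    replace ((C + 1) * (eps / (3 * (C + 1)))) with (eps / 3) in Hn by (field; lra).
    assert (0 < (/ 2) ^ n) by (apply pow_lt; lra). nra. }
  assert (He3 : 0 < eps / 3) by (apply Rdiv_lt_0_compat; [apply cond_pos | lra]).
  assert (Hfn := Hf n x). apply filterlim_locally with (eps := mkposreal _ He3) in Hfn.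
  apply (filter_imp (fun y => ball (f n x) (eps / 3) (f n y))); [|exact Hfn].
  intros y Hy. change (Rabs (g y - g x) < eps).
  change (Rabs (f n y - f n x) < eps / 3) in Hy.
  replace (g y - g x) with ((g y - f n y) + (f n y - f n x) - (g x - f n x)) by ring.
  assert (H1 := Hg n y). assert (H2 := Hg n x).
  eapply Rle_lt_trans; [apply Rabs_triang|]. rewrite Rabs_Ropp.
  eapply Rle_lt_trans; [apply Rplus_le_compat_r, Rabs_triang|]. lra.
Qed.

Definition continuous_bounded (B : R) (u : R -> R) : Prop :=
  continuous_R u /\ forall x, Rabs (u x) <= B.

Lemma contraction_fixed_point (Phi : (R -> R) -> R -> R) (B : R) : 0 <= B ->
  (forall u, continuous_bounded B u -> continuous_bounded B (Phi u)) ->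
  (forall u v d, continuous_bounded B u -> continuous_bounded B v ->
     (forall x, Rabs (u x - v x) <= d) -> forall x, Rabs (Phi u x - Phi v x) <= d / 2) ->
  exists u, continuous_bounded B u /\ Phi u = u.
Proof.
  intros HB Hball Hcontr.
  set (it n := Nat.iter n Phi (fun _ => 0)).
  assert (Hit : forall n, continuous_bounded B (it n)).
  { induction n as [|n IH]; [|apply Hball, IH].
    split; [apply continuous_R_const | intros; simpl; rewrite Rabs_R0; lra]. }
  assert (Hstep : forall n x, Rabs (it (S n) x - it n x) <= 2 * B * (/ 2) ^ n).
  { induction n as [|n IH]; intros x.
    - destruct (Hit 1%nat) as [_ H1], (Hit 0%nat) as [_ H0].
      assert (A1 := H1 x). assert (A0 := H0 x). simpl pow.
      eapply Rle_trans; [apply Rabs_triang|]. rewrite Rabs_Ropp. lra.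
    - eapply Rle_trans; [exact (Hcontr _ _ _ (Hit (S n)) (Hit n) IH x)|].
      simpl pow; lra. }
  set (u x := real (Lim_seq (fun n => it n x))).
  assert (Hu : forall n x, Rabs (u x - it n x) <= 4 * B * (/ 2) ^ n).
  { intros n x. replace (4 * B) with (2 * (2 * B)) by ring.
    exact (Lim_seq_geometric_error (fun n => it n x) (2 * B) (fun n => Hstep n x) n). }
  assert (Hub : continuous_bounded B u).
  { split.
    - apply (continuous_R_geometric_limit it u (4 * B)); [intros n; apply Hit | exact Hu].
    - intros x. apply (Rle_of_le_add_half_pow _ _ (4 * B)). intros n.
      destruct (Hit n) as [_ Hn]. assert (A := Hn x). assert (A' := Hu n x).
      replace (u x) with ((u x - it n x) + it n x) by ring.
      eapply Rle_trans; [apply Rabs_triang | lra]. }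
  exists u. split; [exact Hub|].
  apply functional_extensionality; intros x.
  enough (Rabs (Phi u x - u x) <= 0) by (apply Rminus_diag_uniq, Rabs_eq_0;
                                        assert (H0 := Rabs_pos (Phi u x - u x)); lra).
  apply (Rle_of_le_add_half_pow _ _ (4 * B)). intros n.
  assert (A1 := Hcontr _ _ _ Hub (Hit n) (Hu n) x).
  assert (A2 := Hu (S n) x). simpl pow in A2. change (it (S n) x) with (Phi (it n) x) in A2.
  replace (Phi u x - u x) with ((Phi u x - Phi (it n) x) - (u x - Phi (it n) x)) by ring.
  eapply Rle_trans; [apply Rabs_triang|]. rewrite Rabs_Ropp. lra.
Qed.

Lemma eq_of_is_derive_0 f a b : a < b -> continuous_R (fun x => f (clamp a b x)) ->
  (forall x, a < x < b -> is_derive f x 0) -> f a = f b.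
Proof.
  intros Hab Hc Hd.
  destruct (MVT_gen (fun x => f (clamp a b x)) a b (fun _ => 0)) as [x [_ Hx]].
  - rewrite Rmin_left, Rmax_right by lra. intros x Hx.
    apply (is_derive_ext_loc f); [|apply Hd; lra].
    assert (He : 0 < Rmin (x - a) (b - x)) by (apply Rmin_pos; lra).
    exists (mkposreal _ He); intros y Hy.
    change (Rabs (y - x) < Rmin (x - a) (b - x)) in Hy.
    assert (Hm1 := Rmin_l (x - a) (b - x)). assert (Hm2 := Rmin_r (x - a) (b - x)).
    apply Rabs_def2 in Hy. rewrite clamp_id; lra.
  - intros x _; apply continuity_pt_of_continuous_R, Hc.
  - rewrite !clamp_id in Hx by lra. lra.
Qed.

Lemma is_derive_value_eq (f : R -> R) x d d' : is_derive f x d -> d = d' -> is_derive f x d'.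
Proof. intros H <-; exact H. Qed.

Lemma is_derive_mult_R f g x df dg : is_derive f x df -> is_derive g x dg ->
  is_derive (fun t => f t * g t) x (df * g x + f x * dg).
Proof. intros Hf Hg; apply (is_derive_mult f g); auto; apply Rmult_comm. Qed.

Lemma is_derive_exp_scal K x : is_derive (fun x => exp (K * x)) x (K * exp (K * x)).
Proof. auto_derive; [exact I | ring]. Qed.

Lemma gronwall_backward (D : R -> R) a b K : 0 <= K -> continuous_R D ->
  (forall x, a <= x <= b -> 0 <= D x) ->
  (forall t, a <= t <= b -> D t <= K * RInt D t b) -> forall t, a <= t <= b -> D t = 0.
Proof.
  intros HK HD Hpos H t Ht.
  (* [Q] is nondecreasing on [[a, b]] and vanishes at [b]. *)
  set (Q x := exp (K * x) * RInt D x b).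
  set (dQ x := exp (K * x) * (K * RInt D x b - D x)).
  assert (HQ : forall x, is_derive Q x (dQ x)).
  { intros x. replace (dQ x) with (K * exp (K * x) * RInt D x b + exp (K * x) * - D x)
      by (unfold dQ; ring).
    apply (is_derive_mult_R (fun x => exp (K * x)) (fun x => RInt D x b)).
    - apply is_derive_exp_scal.
    - apply is_derive_RInt_upper, HD. }
  assert (HI : 0 <= RInt D t b) by (apply RInt_ge_0_R; [exact HD | lra | intros; apply Hpos; lra]).
  assert (HQtb : Q t <= Q b).
  { destruct (Req_dec t b) as [->|Hne]; [lra|].
    destruct (MVT_gen Q t b dQ) as [x [Hx E]].
    - intros x _; apply HQ.
    - intros x _. apply continuity_pt_filterlim, (ex_derive_continuous (V := R_NormedModule)).
      exists (dQ x); apply HQ.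
    - rewrite Rmin_left, Rmax_right in Hx by lra.
      assert (0 <= dQ x) by (apply Rmult_le_pos; [left; apply exp_pos | specialize (H x); lra]).
      nra. }
  assert (HQb : Q b = 0) by (unfold Q; rewrite RInt_point; unfold zero; simpl; ring).
  assert (HIt : RInt D t b = 0).
  { rewrite HQb in HQtb; unfold Q in HQtb. assert (0 < exp (K * t)) by apply exp_pos. nra. }
  specialize (H t Ht). specialize (Hpos t Ht). rewrite HIt, Rmult_0_r in H. lra.
Qed.

Lemma bounded_on_interval f a b : continuous_R f -> a <= b ->
  exists M, 0 <= M /\ forall x, a <= x <= b -> Rabs (f x) <= M.
Proof.
  intros Hf Hab. destruct (continuity_ab_maj (fun x => Rabs (f x)) a b Hab) as [x [Hx _]].
  - intros y _; apply continuity_pt_of_continuous_R; continuity_R.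
  - exists (Rabs (f x)); split; [apply Rabs_pos | exact Hx].
Qed.

Lemma continuous_2d_of_eps_delta (f : R -> R -> R) x0 y0 :
  (forall eps : posreal, exists d : posreal, forall x y,
     Rabs (x - x0) < d -> Rabs (y - y0) < d -> Rabs (f x y - f x0 y0) < eps) ->
  continuous (fun p : R * R => f (fst p) (snd p)) (x0, y0).
Proof.
  intros H. apply filterlim_locally; intros eps.
  destruct (H eps) as [d Hd]. exists d. intros [x y] [H1 H2]. apply Hd; auto.
Qed.

Lemma continuous_R_along_domain (F : R -> R -> R) (D : R * R -> Prop) (a b : R -> R) :
  (forall x y, Rabs (a x - a y) <= Rabs (x - y)) ->
  (forall x y, Rabs (b x - b y) <= Rabs (x - y)) ->
  (forall x, D (a x, b x)) ->
  (forall x, filterlim (fun p : R * R => F (fst p) (snd p))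
               (within D (locally (a x, b x))) (locally (F (a x) (b x)))) ->
  continuous_R (fun x => F (a x) (b x)).
Proof.
  intros Ha Hb HD HF x.
  apply (filterlim_comp _ _ _ (fun x => (a x, b x)) (fun p : R * R => F (fst p) (snd p)) _
           (within D (locally (a x, b x)))); [|apply HF].
  apply (filterlim_within_of_range (locally x)); [|exact HD].
  apply filterlim_locally; intros eps; exists eps; intros y Hy.
  split; [exact (Rle_lt_trans _ _ _ (Ha y x) Hy) | exact (Rle_lt_trans _ _ _ (Hb y x) Hy)].
Qed.

Section ShiftedIntegrand.
Variables a l : R -> R.
Hypotheses (Ha : continuous_R a) (Hl : continuous_R l).

Lemma continuous_R_shifted_integrand tau : continuous_R (fun s => a s * l (s - tau)).
Proof. continuity_R. Qed.

(* By uniform continuity of [l] on a compact interval. *)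
Lemma RInt_shift_continuity t b tau0 (eps : posreal) : exists d : posreal, forall tau,
  Rabs (tau - tau0) < d ->
  Rabs (RInt (fun s => a s * l (s - tau)) t b - RInt (fun s => a s * l (s - tau0)) t b) <= eps.
Proof.
  destruct (bounded_on_interval a (Rmin t b) (Rmax t b) Ha (Rmin_Rmax t b)) as [Ma [HMa Hab]].
  set (eps1 := eps / ((Rabs (b - t) + 1) * (Ma + 1))).
  assert (Hbt := Rabs_pos (b - t)).
  assert (He1 : 0 < eps1) by (apply Rdiv_lt_0_compat; [apply cond_pos | nra]).
  destruct (@Heine_cor2 l (Rmin t b - tau0 - 1) (Rmax t b - tau0 + 1)
              (fun x _ => continuity_pt_of_continuous_R l x Hl) (mkposreal _ He1)) as [d1 Hd1].
  assert (Hd : 0 < Rmin 1 d1) by (apply Rmin_pos; [lra | apply cond_pos]).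
  exists (mkposreal _ Hd); simpl; intros tau Htau.
  assert (Hm1 := Rmin_l 1 d1). assert (Hm2 := Rmin_r 1 d1).
  rewrite <- RInt_minus_R by apply continuous_R_shifted_integrand.
  eapply Rle_trans; [apply abs_RInt_le_dist with (M := Ma * eps1)|].
  - continuity_R.
  - intros s Hs. rewrite <- Rmult_minus_distr_l, Rabs_mult.
    apply Rmult_le_compat; try apply Rabs_pos; [apply Hab; exact Hs|].
    apply Rabs_def2 in Htau. left; apply Hd1; simpl in *; try lra.
    replace (s - tau - (s - tau0)) with (tau0 - tau) by ring. apply Rabs_def1; lra.
  - assert (Hprod : Rabs (b - t) * Ma <= (Rabs (b - t) + 1) * (Ma + 1)) by nra.
    replace (pos eps) with (eps1 * ((Rabs (b - t) + 1) * (Ma + 1))) by (unfold eps1; field; nra).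
    nra.
Qed.

Lemma continuous_RInt_shift b Lb tau0 t0 : (forall x, Rabs (l x) <= Lb) ->
  continuous (fun p : R * R => RInt (fun s => a s * l (s - fst p)) (snd p) b) (tau0, t0).
Proof.
  intros HLb.
  apply (continuous_2d_of_eps_delta (fun tau t => RInt (fun s => a s * l (s - tau)) t b)).
  intros eps.
  assert (HLb0 : 0 <= Lb) by exact (Rle_trans _ _ _ (Rabs_pos _) (HLb 0)).
  assert (He2 : 0 < eps / 2) by (apply Rdiv_lt_0_compat; [apply cond_pos | lra]).
  destruct (RInt_shift_continuity t0 b tau0 (mkposreal _ He2)) as [d1 Hd1].
  destruct (bounded_on_interval a (t0 - 1) (t0 + 1) Ha ltac:(lra)) as [Ma [HMa Hab]].
  set (d2 := eps / (2 * (Ma * Lb + 1))).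
  assert (Hd2 : 0 < d2) by (apply Rdiv_lt_0_compat; [apply cond_pos | nra]).
  assert (Hd : 0 < Rmin 1 (Rmin d1 d2))
    by (apply Rmin_pos; [lra | apply Rmin_pos, Hd2; apply cond_pos]).
  exists (mkposreal _ Hd); simpl; intros tau t Htau Ht.
  assert (Hm1 := Rmin_l 1 (Rmin d1 d2)). assert (Hm2 := Rmin_r 1 (Rmin d1 d2)).
  assert (Hm3 := Rmin_l d1 d2). assert (Hm4 := Rmin_r d1 d2).
  rewrite <- (RInt_Chasles_R _ (continuous_R_shifted_integrand tau) t t0 b).
  assert (Hnear : Rabs (RInt (fun s => a s * l (s - tau)) t t0) <= Rabs (t0 - t) * (Ma * Lb)).
  { apply abs_RInt_le_dist; [apply continuous_R_shifted_integrand|]. intros s Hs.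
    rewrite Rabs_mult. apply Rabs_def2 in Ht.
    apply Rmult_le_compat; try apply Rabs_pos; [apply Hab | apply HLb].
    unfold Rmin, Rmax in Hs; destruct Rle_dec; lra. }
  assert (Hfar := Hd1 tau ltac:(lra)). simpl in Hfar.
  assert (Hsmall : Rabs (t0 - t) * (Ma * Lb) < eps / 2).
  { rewrite Rabs_minus_sym.
    apply Rle_lt_trans with (d2 * (Ma * Lb)); [apply Rmult_le_compat_r; nra|].
    replace (eps / 2) with (d2 * (Ma * Lb + 1)) by (unfold d2; field; nra). nra. }
  replace (RInt (fun s => a s * l (s - tau)) t t0 + RInt (fun s => a s * l (s - tau)) t0 b
           - RInt (fun s => a s * l (s - tau0)) t0 b)
    with (RInt (fun s => a s * l (s - tau)) t t0 + (RInt (fun s => a s * l (s - tau)) t0 b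
           - RInt (fun s => a s * l (s - tau0)) t0 b)) by ring.
  eapply Rle_lt_trans; [apply Rabs_triang | lra].
Qed.

End ShiftedIntegrand.

(** * The Riccati system *)

Section Riccati.
Variables T q eta c k : R.
(* [l] stands for [lam] extended to [R]; see [l_lam] below. *)
Variables (l : R -> R) (Lm : R).
Hypotheses (HT : 0 < T) (Hq : 0 < q) (Heta : 0 < eta) (Hc : 0 < c).
Hypotheses (l_cont : continuous_R l) (l_range : forall x, 0 <= l x <= Lm).

Lemma Lm_nonneg : 0 <= Lm.
Proof. specialize (l_range 0); lra. Qed.

Lemma Rabs_l_le x : Rabs (l x) <= Lm.
Proof. specialize (l_range x); rewrite Rabs_right; lra. Qed.

Definition source (x : R) : R := 2 * x ^ 2 - 2 * q * x + eta / 2.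
Definition source_bound (B : R) : R := 2 * B ^ 2 + 2 * q * B + eta / 2.
Definition source_lip (B : R) : R := 4 * B + 2 * q.

Lemma continuous_R_source : continuous_R source.
Proof.
  intros x; apply (ex_derive_continuous (V := R_NormedModule)).
  unfold source; auto_derive; exact I.
Qed.
#[local] Hint Resolve continuous_R_source : continuity_R.

Lemma source_bound_nonneg B : 0 <= B -> 0 <= source_bound B.
Proof. intros HB; unfold source_bound; nra. Qed.

Lemma source_lip_nonneg B : 0 <= B -> 0 <= source_lip B.
Proof. intros HB; unfold source_lip; lra. Qed.

Lemma Rabs_source_le B x : Rabs x <= B -> Rabs (source x) <= source_bound B.
Proof.
  intros Hx. apply Rabs_le_between in Hx. unfold source, source_bound.
  apply Rabs_le_between; split; nra.
Qed.

Lemma Rabs_source_diff_le B x y : Rabs x <= B -> Rabs y <= B ->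
  Rabs (source x - source y) <= source_lip B * Rabs (x - y).
Proof.
  intros Hx Hy. unfold source, source_lip.
  replace (2 * x ^ 2 - 2 * q * x + eta / 2 - (2 * y ^ 2 - 2 * q * y + eta / 2))
    with ((2 * (x + y) - 2 * q) * (x - y)) by ring.
  rewrite Rabs_mult. apply Rmult_le_compat_r; [apply Rabs_pos|].
  apply Rabs_le_between in Hx, Hy. apply Rabs_le_between; split; lra.
Qed.

Definition rate_integral (u : R -> R) (t : R) : R := RInt (fun s => 2 * k + 4 * u s) 0 t.

(* [propagator u t s = exp (- int_t^s (2 k + 4 u))], the resolvent of [y' = (2 k + 4 u) y]. *)
Definition propagator (u : R -> R) (t s : R) : R :=
  exp (rate_integral u t - rate_integral u s).

(* For a frozen diagonal [u], the solution of [d/dt y = (2 k + 4 u t) y - l (t - tau) source (u t)]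
   with [y T = c / 2 * l (T - tau)], by variation of constants. *)
Definition slice_sol (u : R -> R) (tau t : R) : R :=
  propagator u t T * (c / 2 * l (T - tau))
  + RInt (fun s => propagator u t s * (l (s - tau) * source (u s))) t T.

Definition diag_map (u : R -> R) (x : R) : R :=
  q / 2 + slice_sol u (clamp 0 T x) (clamp 0 T x).

Section FixedDiagonal.
Variable u : R -> R.
Hypothesis u_cont : continuous_R u.

Lemma is_derive_rate_integral t : is_derive (rate_integral u) t (2 * k + 4 * u t).
Proof. apply (is_derive_RInt_lower (fun s => 2 * k + 4 * u s)); continuity_R. Qed.

Lemma continuous_R_rate_integral : continuous_R (rate_integral u).
Proof.
  intros x; apply (ex_derive_continuous (V := R_NormedModule)).
  eexists; apply is_derive_rate_integral.
Qed.
#[local] Hint Resolve continuous_R_rate_integral : continuity_R.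

Lemma continuous_R_propagator t : continuous_R (propagator u t).
Proof. unfold propagator; continuity_R. Qed.
#[local] Hint Resolve continuous_R_propagator : continuity_R.

Lemma propagator_eq t s : propagator u t s = exp (- RInt (fun r => 2 * k + 4 * u r) t s).
Proof.
  unfold propagator, rate_integral. f_equal.
  rewrite <- (RInt_Chasles_R (fun r => 2 * k + 4 * u r) ltac:(continuity_R) 0 t s). ring.
Qed.

Lemma rate_RInt_lower_bound t s kap : t <= s ->
  (forall r, t <= r <= s -> kap <= 2 * k + 4 * u r) ->
  kap * (s - t) <= RInt (fun r => 2 * k + 4 * u r) t s.
Proof.
  intros Hts H. rewrite Rmult_comm, <- RInt_const_R.
  apply RInt_le_R; [continuity_R | continuity_R | exact Hts | exact H].
Qed.

Lemma propagator_le t s kap : t <= s -> (forall r, t <= r <= s -> kap <= 2 * k + 4 * u r) ->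
  propagator u t s <= exp (- kap * (s - t)).
Proof.
  intros Hts H. rewrite propagator_eq. apply exp_le_exp_of_le.
  assert (Hlow := rate_RInt_lower_bound t s kap Hts H). lra.
Qed.

Lemma slice_sol_terminal tau : slice_sol u tau T = c / 2 * l (T - tau).
Proof.
  unfold slice_sol, propagator. rewrite RInt_point, Rminus_diag, exp_0.
  unfold zero; simpl; ring.
Qed.

Lemma slice_sol_factor tau t :
  slice_sol u tau t = exp (rate_integral u t) *
    (exp (- rate_integral u T) * (c / 2 * l (T - tau))
     + RInt (fun s => exp (- rate_integral u s) * source (u s) * l (s - tau)) t T).
Proof.
  unfold slice_sol, propagator. rewrite Rmult_plus_distr_l, <- RInt_scal_R by continuity_R.
  unfold Rminus; rewrite exp_plus. f_equal; [ring|].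
  apply RInt_ext; intros x _; simpl. rewrite exp_plus. ring.
Qed.

Lemma is_derive_slice_sol tau t : is_derive (slice_sol u tau) t
  ((2 * k + 4 * u t) * slice_sol u tau t - l (t - tau) * source (u t)).
Proof.
  set (a s := exp (- rate_integral u s) * source (u s)).
  apply (is_derive_ext (fun t => exp (rate_integral u t) *
     (exp (- rate_integral u T) * (c / 2 * l (T - tau))
      + RInt (fun s => a s * l (s - tau)) t T))); [intros; symmetry; apply slice_sol_factor|].
  eapply is_derive_value_eq; [apply is_derive_mult_R|].
  - apply (is_derive_comp exp (rate_integral u));
      [apply is_derive_exp | apply is_derive_rate_integral].
  - apply (is_derive_plus (fun _ => exp (- rate_integral u T) * (c / 2 * l (T - tau)))).
    + apply (is_derive_const (K := R_AbsRing) (V := R_NormedModule)).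
    + apply (is_derive_RInt_upper (fun s => a s * l (s - tau))); unfold a; continuity_R.
  - rewrite (slice_sol_factor tau t). unfold a, scal, plus, zero; simpl; unfold mult; simpl.
    rewrite (exp_Ropp (rate_integral u t)). field. apply Rgt_not_eq, exp_pos.
Qed.

Lemma continuous_R_slice_sol tau : continuous_R (slice_sol u tau).
Proof.
  intros t; apply (ex_derive_continuous (V := R_NormedModule)).
  eexists; apply is_derive_slice_sol.
Qed.

Lemma continuous_slice_sol tau t :
  continuous (fun p : R * R => slice_sol u (fst p) (snd p)) (tau, t).
Proof.
  set (a s := exp (- rate_integral u s) * source (u s)).
  apply (continuous_ext (fun p : R * R => exp (rate_integral u (snd p)) *
     (exp (- rate_integral u T) * (c / 2 * l (T - fst p))
      + RInt (fun s => a s * l (s - fst p)) (snd p) T))); [intros; symmetry; apply slice_sol_factor|].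
  apply (continuous_mult (fun p : R * R => exp (rate_integral u (snd p)))
           (fun p : R * R => exp (- rate_integral u T) * (c / 2 * l (T - fst p))
                             + RInt (fun s => a s * l (s - fst p)) (snd p) T)).
  - assert (Hexp : continuous_R (fun s => exp (rate_integral u s))) by continuity_R.
    apply (continuous_comp (fun p : R * R => snd p) (fun s => exp (rate_integral u s)));
      [apply continuous_snd | apply Hexp].
  - apply (continuous_plus (fun p : R * R => exp (- rate_integral u T) * (c / 2 * l (T - fst p)))
           (fun p : R * R => RInt (fun s => a s * l (s - fst p)) (snd p) T)).
    + assert (Hterm : continuous_R (fun x => exp (- rate_integral u T) * (c / 2 * l (T - x))))
        by continuity_R.
      apply (continuous_comp (fun p : R * R => fst p)
               (fun x => exp (- rate_integral u T) * (c / 2 * l (T - x))));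
        [apply continuous_fst | apply Hterm].
    + apply (continuous_RInt_shift a l) with (Lb := Lm);
        [unfold a; continuity_R | exact l_cont | apply Rabs_l_le].
Qed.

End FixedDiagonal.
#[local] Hint Resolve continuous_R_rate_integral continuous_R_propagator : continuity_R.

Lemma diag_map_clamp u x : diag_map u (clamp 0 T x) = diag_map u x.
Proof. unfold diag_map; rewrite clamp_idem; [reflexivity | lra]. Qed.

Lemma continuous_R_diag_map u : continuous_R u -> continuous_R (diag_map u).
Proof.
  intros Hu. unfold diag_map.
  assert (Hdiag : continuous_R (fun x => slice_sol u x x)).
  { intros x. apply (continuous_comp_2 (fun x => x) (fun x => x) (slice_sol u));
      [apply continuous_id | apply continuous_id | apply continuous_slice_sol, Hu]. }
  apply (continuous_R_plus (fun _ => q / 2)); [apply continuous_R_const|].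
  exact (continuous_R_comp (clamp 0 T) _ (continuous_R_clamp 0 T) Hdiag).
Qed.


Lemma Rabs_propagator_diff_le u v t s kap : continuous_R u -> continuous_R v -> t <= s ->
  (forall r, t <= r <= s -> kap <= 2 * k + 4 * u r) ->
  (forall r, t <= r <= s -> kap <= 2 * k + 4 * v r) ->
  Rabs (propagator u t s - propagator v t s)
    <= exp (- kap * (s - t)) * RInt (fun r => 4 * Rabs (u r - v r)) t s.
Proof.
  intros Hu Hv Hts Hku Hkv. rewrite !propagator_eq by auto.
  eapply Rle_trans; [apply Rabs_exp_opp_diff_le with (m := kap * (s - t));
                     apply rate_RInt_lower_bound; auto|].
  replace (- (kap * (s - t))) with (- kap * (s - t)) by ring.
  apply Rmult_le_compat_l; [left; apply exp_pos|].
  rewrite <- RInt_minus_R by continuity_R.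
  eapply Rle_trans; [apply abs_RInt_le_R; [continuity_R | exact Hts]|].
  right. apply RInt_ext; intros x _; simpl.
  replace (2 * k + 4 * u x - (2 * k + 4 * v x)) with (4 * (u x - v x)) by ring.
  rewrite Rabs_mult, (Rabs_right 4) by lra. reflexivity.
Qed.

Lemma Rabs_slice_sol_le u B tau t : 0 < k -> 0 <= B -> 4 * B <= k -> continuous_R u ->
  (forall s, 0 <= s <= T -> Rabs (u s) <= B) -> 0 <= t <= T ->
  Rabs (slice_sol u tau t) <= c / 2 * Lm + Lm * source_bound B / k.
Proof.
  intros Hk HB HkB Hu HuB Ht.
  assert (Hdecay : forall s, t <= s <= T -> propagator u t s <= exp (- k * (s - t))).
  { intros s Hs. apply propagator_le; [exact Hu | lra |]. intros r Hr.
    assert (H := HuB r ltac:(lra)). apply Rabs_le_between in H. lra. }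
  assert (HLm := Lm_nonneg). assert (HFb := source_bound_nonneg B HB).
  unfold slice_sol. eapply Rle_trans; [apply Rabs_triang | apply Rplus_le_compat].
  - assert (H1 : propagator u t T <= 1).
    { eapply Rle_trans; [apply Hdecay; lra|]. rewrite <- exp_0. apply exp_le_exp_of_le. nra. }
    assert (Hl := l_range (T - tau)). assert (0 < propagator u t T) by apply exp_pos.
    assert (Hy : 0 <= c / 2 * l (T - tau) <= c / 2 * Lm) by (split; nra).
    rewrite Rabs_mult, !Rabs_right by lra.
    apply Rle_trans with (1 * (c / 2 * l (T - tau))); [apply Rmult_le_compat_r|]; lra.
  - eapply Rle_trans; [apply abs_RInt_le_R; [continuity_R | lra]|].
    eapply Rle_trans;
      [apply RInt_le_R with (g := fun s => Lm * source_bound B * exp (- k * (s - t)))|].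
    + continuity_R.
    + continuity_R.
    + lra.
    + intros s Hs. assert (Hl := l_range (s - tau)). assert (0 < propagator u t s) by apply exp_pos.
      assert (HF := Rabs_source_le B (u s) (HuB s ltac:(lra))).
      assert (Hd := Hdecay s Hs). assert (H0 := Rabs_pos (source (u s))).
      rewrite !Rabs_mult, (Rabs_right (propagator u t s)), (Rabs_right (l (s - tau))) by lra.
      assert (Rabs (source (u s)) * l (s - tau) <= source_bound B * Lm) by
        (apply Rmult_le_compat; lra).
      assert (0 <= l (s - tau) * Rabs (source (u s))) by nra. nra.
    + rewrite RInt_scal_R by continuity_R.
      assert (Hint := RInt_exp_decay_le k t T Hk ltac:(lra)).
      unfold Rdiv. apply Rmult_le_compat_l; [nra | exact Hint].
Qed.

Lemma Rabs_slice_sol_diff_le u v B tau t E (W : R -> R) :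
  continuous_R u -> continuous_R v -> continuous_R W -> 0 <= B -> 0 <= t <= T ->
  (forall s, t <= s <= T -> Rabs (u s) <= B) -> (forall s, t <= s <= T -> Rabs (v s) <= B) ->
  (forall s, t <= s <= T -> Rabs (propagator u t s - propagator v t s) <= E) ->
  (forall s, t <= s <= T -> propagator v t s <= W s) ->
  Rabs (slice_sol u tau t - slice_sol v tau t)
    <= E * (c / 2 * Lm + T * (Lm * source_bound B))
       + Lm * source_lip B * RInt (fun s => W s * Rabs (u s - v s)) t T.
Proof.
  intros Hu Hv HW HB Ht HuB HvB HE HWv.
  assert (HLm := Lm_nonneg). assert (HFb := source_bound_nonneg B HB).
  assert (HFL := source_lip_nonneg B HB).
  assert (HE0 : 0 <= E) by exact (Rle_trans _ _ _ (Rabs_pos _) (HE T ltac:(lra))).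
  unfold slice_sol.
  match goal with |- Rabs (?a1 + ?i1 - (?a2 + ?i2)) <= _ =>
    replace (a1 + i1 - (a2 + i2)) with ((a1 - a2) + (i1 - i2)) by ring end.
  rewrite <- RInt_minus_R by continuity_R.
  eapply Rle_trans; [apply Rabs_triang|].
  rewrite Rmult_plus_distr_l, Rplus_assoc. apply Rplus_le_compat.
  - rewrite <- Rmult_minus_distr_r, Rabs_mult. assert (Hl := l_range (T - tau)).
    apply Rmult_le_compat; try apply Rabs_pos; [apply HE; lra|].
    rewrite Rabs_right; nra.
  - eapply Rle_trans; [apply abs_RInt_le_R; [continuity_R | lra]|].
    eapply Rle_trans; [apply RInt_le_R with
      (g := fun s => E * (Lm * source_bound B) + Lm * source_lip B * (W s * Rabs (u s - v s)))|].
    + continuity_R.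
    + continuity_R.
    + lra.
    + intros s Hs. assert (Hl := l_range (s - tau)).
      assert (Hpv : 0 <= propagator v t s <= W s) by (split; [left; apply exp_pos | apply HWv; lra]).
      eapply Rle_trans; [apply Rabs_weighted_diff_le with (Ly := Lm); eauto;
                         apply Rabs_source_le, HuB; lra|].
      assert (HFd := Rabs_source_diff_le B (u s) (v s) (HuB s ltac:(lra)) (HvB s ltac:(lra))).
      assert (0 <= W s) by lra. apply Rplus_le_compat_l.
      replace (Lm * source_lip B * (W s * Rabs (u s - v s)))
        with (W s * (Lm * (source_lip B * Rabs (u s - v s)))) by ring.
      apply Rmult_le_compat_l, Rmult_le_compat_l; lra.
    + rewrite RInt_plus_R, RInt_const_R, RInt_scal_R by continuity_R.
      apply Rplus_le_compat_r.
      replace (E * (T * (Lm * source_bound B))) with (T * (E * (Lm * source_bound B))) by ring.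
      apply Rmult_le_compat_r; [apply Rmult_le_pos; nra | lra].
Qed.

Definition slice_lip_const (B : R) : R :=
  2 * c * Lm + 4 * T * Lm * source_bound B + Lm * source_lip B.

Lemma rate_ge_of_Rabs_le (w : R -> R) B r : Rabs (w r) <= B -> 2 * k - 4 * B <= 2 * k + 4 * w r.
Proof. intros H; apply Rabs_le_between in H; lra. Qed.

Lemma Rabs_propagator_diff_le_sup u v B d t s : 0 < k -> 4 * B <= k ->
  continuous_R u -> continuous_R v -> t <= s ->
  (forall r, t <= r <= s -> Rabs (u r) <= B) -> (forall r, t <= r <= s -> Rabs (v r) <= B) ->
  (forall r, t <= r <= s -> Rabs (u r - v r) <= d) ->
  Rabs (propagator u t s - propagator v t s) <= 4 * d / k.
Proof.
  intros Hk HkB Hu Hv Hts HuB HvB Huv.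
  assert (Hd : 0 <= d) by exact (Rle_trans _ _ _ (Rabs_pos _) (Huv t ltac:(lra))).
  eapply Rle_trans; [apply (Rabs_propagator_diff_le u v t s k); auto; intros r Hr|].
  { assert (H := rate_ge_of_Rabs_le u B r (HuB r Hr)); lra. }
  { assert (H := rate_ge_of_Rabs_le v B r (HvB r Hr)); lra. }
  assert (Hint : RInt (fun r => 4 * Rabs (u r - v r)) t s <= (s - t) * (4 * d)).
  { rewrite <- RInt_const_R. apply RInt_le_R; [continuity_R | continuity_R | exact Hts|].
    intros r Hr. assert (H := Huv r Hr). lra. }
  assert (Hdecay := exp_decay_mul_le k (s - t) Hk ltac:(lra)).
  assert (0 < exp (- k * (s - t))) by apply exp_pos.
  apply Rle_trans with (exp (- k * (s - t)) * (s - t) * (4 * d)).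
  - rewrite Rmult_assoc. apply Rmult_le_compat_l; lra.
  - unfold Rdiv. rewrite (Rmult_comm (4 * d)). apply Rmult_le_compat_r; lra.
Qed.

Lemma Rabs_propagator_diff_le_growth u v M t s : 0 <= k ->
  continuous_R u -> continuous_R v -> t <= s ->
  (forall r, t <= r <= s -> Rabs (u r) <= M) -> (forall r, t <= r <= s -> Rabs (v r) <= M) ->
  Rabs (propagator u t s - propagator v t s)
    <= exp (4 * M * (s - t)) * (4 * RInt (fun r => Rabs (u r - v r)) t s).
Proof.
  intros Hk Hu Hv Hts HuM HvM.
  eapply Rle_trans; [apply (Rabs_propagator_diff_le u v t s (- 4 * M)); auto; intros r Hr|].
  { assert (H := rate_ge_of_Rabs_le u M r (HuM r Hr)); lra. }
  { assert (H := rate_ge_of_Rabs_le v M r (HvM r Hr)); lra. }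
  rewrite RInt_scal_R by continuity_R.
  replace (- (- 4 * M) * (s - t)) with (4 * M * (s - t)) by ring. lra.
Qed.

Lemma Rabs_slice_sol_diff_le_sup u v B d tau t : 0 < k -> 0 <= B -> 4 * B <= k ->
  continuous_R u -> continuous_R v ->
  (forall s, 0 <= s <= T -> Rabs (u s) <= B) -> (forall s, 0 <= s <= T -> Rabs (v s) <= B) ->
  (forall s, 0 <= s <= T -> Rabs (u s - v s) <= d) -> 0 <= t <= T ->
  Rabs (slice_sol u tau t - slice_sol v tau t) <= slice_lip_const B * d / k.
Proof.
  intros Hk HB HkB Hu Hv HuB HvB Huv Ht.
  assert (Hd : 0 <= d) by exact (Rle_trans _ _ _ (Rabs_pos _) (Huv 0 ltac:(lra))).
  assert (Hint : RInt (fun s => exp (- k * (s - t)) * Rabs (u s - v s)) t T <= d / k).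
  { eapply Rle_trans; [apply RInt_le_R with (g := fun s => d * exp (- k * (s - t)))|].
    - continuity_R.
    - continuity_R.
    - lra.
    - intros s Hs. rewrite Rmult_comm.
      apply Rmult_le_compat_r; [left; apply exp_pos | apply Huv; lra].
    - rewrite RInt_scal_R by continuity_R. unfold Rdiv.
      apply Rmult_le_compat_l; [exact Hd | apply RInt_exp_decay_le; lra]. }
  eapply Rle_trans;
    [apply (Rabs_slice_sol_diff_le u v B tau t (4 * d / k) (fun s => exp (- k * (s - t))));
    [exact Hu | exact Hv | continuity_R | exact HB | exact Ht | intros s Hs; apply HuB; lra
    | intros s Hs; apply HvB; lra | | ]|].
  - intros s Hs. apply (Rabs_propagator_diff_le_sup u v B); auto; try lra; intros r Hr;
      [apply HuB | apply HvB | apply Huv]; lra.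
  - intros s Hs. apply propagator_le; [exact Hv | lra |]. intros r Hr.
    assert (H := rate_ge_of_Rabs_le v B r (HvB r ltac:(lra))); lra.
  - assert (HLm := Lm_nonneg). assert (HFL := source_lip_nonneg B HB).
    apply Rle_trans with (4 * d / k * (c / 2 * Lm + T * (Lm * source_bound B))
                          + Lm * source_lip B * (d / k)).
    + apply Rplus_le_compat_l, Rmult_le_compat_l; [nra | exact Hint].
    + unfold slice_lip_const; right; field; lra.
Qed.

Lemma Rabs_slice_sol_diff_le_integral u v M tau t : 0 <= k -> 0 <= M ->
  continuous_R u -> continuous_R v ->
  (forall s, 0 <= s <= T -> Rabs (u s) <= M) -> (forall s, 0 <= s <= T -> Rabs (v s) <= M) ->
  0 <= t <= T ->
  Rabs (slice_sol u tau t - slice_sol v tau t)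
    <= exp (4 * M * T) * slice_lip_const M * RInt (fun s => Rabs (u s - v s)) t T.
Proof.
  intros Hk HM Hu Hv HuM HvM Ht.
  set (X := exp (4 * M * T)). set (I s := RInt (fun r => Rabs (u r - v r)) t s).
  assert (HI : forall s, t <= s <= T -> 0 <= I s <= I T).
  { intros s Hs. unfold I.
    rewrite <- (RInt_Chasles_R (fun r => Rabs (u r - v r)) ltac:(continuity_R) t s T).
    assert (0 <= RInt (fun r => Rabs (u r - v r)) t s) by
      (apply RInt_ge_0_R; [continuity_R | lra | intros; apply Rabs_pos]).
    assert (0 <= RInt (fun r => Rabs (u r - v r)) s T) by
      (apply RInt_ge_0_R; [continuity_R | lra | intros; apply Rabs_pos]). lra. }
  assert (Hgrowth : forall s, t <= s <= T -> exp (4 * M * (s - t)) <= X).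
  { intros s Hs. apply exp_le_exp_of_le. nra. }
  eapply Rle_trans; [apply (Rabs_slice_sol_diff_le u v M tau t (X * (4 * I T)) (fun _ => X));
    [exact Hu | exact Hv | continuity_R | exact HM | exact Ht | intros s Hs; apply HuM; lra
    | intros s Hs; apply HvM; lra | | ]|].
  - intros s Hs. eapply Rle_trans;
      [apply (Rabs_propagator_diff_le_growth u v M); auto; try lra; intros r Hr;
       [apply HuM | apply HvM]; lra|].
    assert (HIs := HI s Hs). unfold I in HIs |- *.
    apply Rmult_le_compat; [left; apply exp_pos | lra | apply Hgrowth, Hs | lra].
  - intros s Hs. eapply Rle_trans; [apply propagator_le with (kap := - 4 * M); [exact Hv | lra |]|].
    + intros r Hr. assert (H := rate_ge_of_Rabs_le v M r (HvM r ltac:(lra))); lra.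
    + replace (- (- 4 * M) * (s - t)) with (4 * M * (s - t)) by ring. apply Hgrowth, Hs.
  - rewrite RInt_scal_R by continuity_R. fold (I T). unfold slice_lip_const. right; field.
Qed.

Lemma diag_map_continuous_bounded u B : 0 < k -> 0 <= B -> 4 * B <= k ->
  q / 2 + (c / 2 * Lm + Lm * source_bound B / k) <= B ->
  continuous_bounded B u -> continuous_bounded B (diag_map u).
Proof.
  intros Hk HB HkB Hball [Hu HuB]. split; [apply continuous_R_diag_map, Hu|].
  intros x. unfold diag_map. eapply Rle_trans; [apply Rabs_triang|].
  rewrite (Rabs_right (q / 2)) by lra.
  assert (H := Rabs_slice_sol_le u B (clamp 0 T x) (clamp 0 T x) Hk HB HkB Hu
                 (fun s _ => HuB s) (clamp_in 0 T ltac:(lra) x)). lra.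
Qed.

Lemma diag_map_contraction u v B d x : 0 < k -> 0 <= B -> 4 * B <= k ->
  slice_lip_const B / k <= / 2 ->
  continuous_bounded B u -> continuous_bounded B v -> (forall x, Rabs (u x - v x) <= d) ->
  Rabs (diag_map u x - diag_map v x) <= d / 2.
Proof.
  intros Hk HB HkB Hlip [Hu HuB] [Hv HvB] Huv.
  assert (Hd : 0 <= d) by exact (Rle_trans _ _ _ (Rabs_pos _) (Huv x)).
  unfold diag_map.
  match goal with |- Rabs (q / 2 + ?a - (q / 2 + ?b)) <= _ =>
    replace (q / 2 + a - (q / 2 + b)) with (a - b) by ring end.
  eapply Rle_trans; [apply (Rabs_slice_sol_diff_le_sup u v B d); auto;
                     apply clamp_in; lra|].
  replace (slice_lip_const B * d / k) with (slice_lip_const B / k * d) by (field; lra).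
  replace (d / 2) with (/ 2 * d) by field. apply Rmult_le_compat_r; auto.
Qed.

Lemma diag_map_fixed_point B : 0 < k -> 0 <= B -> 4 * B <= k ->
  q / 2 + (c / 2 * Lm + Lm * source_bound B / k) <= B -> slice_lip_const B / k <= / 2 ->
  exists u, continuous_bounded B u /\ diag_map u = u.
Proof.
  intros Hk HB HkB Hball Hlip. apply contraction_fixed_point; [exact HB | |].
  - intros u; apply diag_map_continuous_bounded; auto.
  - intros u v d Hu Hv Huv x; apply (diag_map_contraction u v B); auto.
Qed.

Lemma diag_map_fixed_point_unique u v : 0 <= k -> continuous_R u -> continuous_R v ->
  diag_map u = u -> diag_map v = v -> u = v.
Proof.
  intros Hk Hu Hv Hfu Hfv.
  destruct (bounded_on_interval u 0 T Hu ltac:(lra)) as [Mu [HMu Hub]].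
  destruct (bounded_on_interval v 0 T Hv ltac:(lra)) as [Mv [HMv Hvb]].
  set (M := Rmax Mu Mv).
  assert (HM : 0 <= M) by (apply (Rle_trans _ Mu); [exact HMu | apply Rmax_l]).
  assert (HK : 0 <= exp (4 * M * T) * slice_lip_const M).
  { apply Rmult_le_pos; [left; apply exp_pos|].
    assert (HLm := Lm_nonneg). assert (HFb := source_bound_nonneg M HM).
    assert (HFL := source_lip_nonneg M HM). unfold slice_lip_const.
    assert (0 <= T * Lm * source_bound M) by (apply Rmult_le_pos; nra). nra. }
  assert (Hzero : forall t, 0 <= t <= T -> Rabs (u t - v t) = 0).
  { apply (gronwall_backward (fun t => Rabs (u t - v t)) 0 T _ HK); [continuity_R | |].
    - intros; apply Rabs_pos.
    - intros t Ht.
      replace (Rabs (u t - v t)) with (Rabs (diag_map u t - diag_map v t))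
        by (rewrite Hfu, Hfv; reflexivity).
      unfold diag_map. rewrite clamp_id by lra.
      replace (q / 2 + slice_sol u t t - (q / 2 + slice_sol v t t))
        with (slice_sol u t t - slice_sol v t t) by ring.
      apply Rabs_slice_sol_diff_le_integral; auto.
      + intros s Hs; apply (Rle_trans _ Mu); [apply Hub, Hs | apply Rmax_l].
      + intros s Hs; apply (Rle_trans _ Mv); [apply Hvb, Hs | apply Rmax_r]. }
  apply functional_extensionality; intros x.
  rewrite <- Hfu, <- Hfv, <- (diag_map_clamp u), <- (diag_map_clamp v), Hfu, Hfv.
  assert (H := Hzero (clamp 0 T x) (clamp_in 0 T ltac:(lra) x)).
  apply Rabs_eq_0 in H. lra.
Qed.

Variable lam : R -> R.
Hypothesis l_lam : forall x, 0 <= x <= T -> l x = lam x.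

Lemma slice_sol_is_solution u : continuous_R u -> diag_map u = u ->
  is_solution T q eta c k lam (slice_sol u).
Proof.
  intros Hu Hfix. split; [|split].
  - intros tau t _. eapply filterlim_filter_le_1;
      [apply filter_le_within | apply continuous_slice_sol, Hu].
  - intros tau t H0 H1 H2. eexists; split; [apply is_derive_slice_sol, Hu|].
    assert (Hut : u t = diag_map u t) by (rewrite Hfix; reflexivity).
    unfold diag_map in Hut; rewrite clamp_id in Hut by lra.
    rewrite Hut, l_lam by lra. unfold source. field.
  - intros tau Htau. rewrite slice_sol_terminal, l_lam by lra. reflexivity.
Qed.

Definition diagonal (Lam : R -> R -> R) (x : R) : R := Lam (clamp 0 T x) (clamp 0 T x) + q / 2.

Section GivenSolution.
Variable Lam : R -> R -> R.
Hypothesis Lam_sol : is_solution T q eta c k lam Lam.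

Lemma continuous_R_solution_along (a b : R -> R) :
  (forall x y, Rabs (a x - a y) <= Rabs (x - y)) ->
  (forall x y, Rabs (b x - b y) <= Rabs (x - y)) ->
  (forall x, sol_domain T (a x, b x)) -> continuous_R (fun x => Lam (a x) (b x)).
Proof.
  intros Ha Hb HD. apply (continuous_R_along_domain Lam (sol_domain T)); auto.
  intros x; apply (proj1 Lam_sol), HD.
Qed.

Lemma continuous_R_diagonal : continuous_R (diagonal Lam).
Proof.
  unfold diagonal.
  assert (H : continuous_R (fun x => Lam (clamp 0 T x) (clamp 0 T x))).
  { apply continuous_R_solution_along; try apply clamp_lip.
    intros x; assert (Hx := clamp_in 0 T ltac:(lra) x); unfold sol_domain; simpl; lra. }
  continuity_R.
Qed.

(* [Lam tau] and [slice_sol (diagonal Lam) tau] solve the same linear equation in [s], so their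
   difference times the integrating factor is constant. *)
Definition solution_gap (tau s : R) : R :=
  exp (- rate_integral (diagonal Lam) s) * (Lam tau s - slice_sol (diagonal Lam) tau s).

Lemma is_derive_solution_gap tau s : 0 <= tau -> tau < s < T -> is_derive (solution_gap tau) s 0.
Proof.
  intros Htau Hs. set (u := diagonal Lam).
  assert (Hu : continuous_R u) by exact continuous_R_diagonal.
  destruct (proj1 (proj2 Lam_sol) tau s Htau ltac:(lra) ltac:(lra)) as [d [Hd Heq]].
  unfold solution_gap. eapply is_derive_value_eq; [apply is_derive_mult_R|].
  - apply (is_derive_comp exp (fun s => - rate_integral u s)); [apply is_derive_exp|].
    apply (is_derive_opp (rate_integral u)), is_derive_rate_integral, Hu.
  - apply (is_derive_minus (fun s => Lam tau s) (slice_sol u tau)); [exact Hd|].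
    apply is_derive_slice_sol, Hu.
  - assert (Hus : u s = Lam s s + q / 2) by (unfold u, diagonal; rewrite clamp_id by lra; reflexivity).
    unfold scal, minus, plus, opp; simpl; unfold mult, opp; simpl.
    unfold u in *. rewrite Hus, l_lam by lra. unfold source.
    replace d with (2 * k * Lam tau s - 2 * lam (s - tau) * (Lam s s + q / 2) ^ 2
                    + 4 * (Lam tau s + q / 2 * lam (s - tau)) * (Lam s s + q / 2)
                    - eta / 2 * lam (s - tau)) by lra.
    field.
Qed.

Lemma continuous_R_solution_gap_clamp tau t : 0 <= tau <= t -> t <= T ->
  continuous_R (fun s => solution_gap tau (clamp t T s)).
Proof.
  intros Htau Ht. unfold solution_gap.
  assert (Hu : continuous_R (diagonal Lam)) by exact continuous_R_diagonal.
  assert (Hslice : continuous_R (slice_sol (diagonal Lam) tau))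
    by exact (continuous_R_slice_sol _ Hu tau).
  assert (HL : continuous_R (fun s => Lam tau (clamp t T s))).
  { apply (continuous_R_solution_along (fun _ => tau)); [| apply clamp_lip |].
    - intros; rewrite Rminus_diag, Rabs_R0; apply Rabs_pos.
    - intros x; assert (Hx := clamp_in t T ltac:(lra) x); unfold sol_domain; simpl; lra. }
  continuity_R.
Qed.

Lemma solution_eq_slice_sol tau t : sol_domain T (tau, t) ->
  Lam tau t = slice_sol (diagonal Lam) tau t.
Proof.
  unfold sol_domain; simpl; intros Hdom.
  assert (Hterm : Lam tau T = slice_sol (diagonal Lam) tau T)
    by (rewrite slice_sol_terminal, (proj2 (proj2 Lam_sol)), l_lam by lra; reflexivity).
  destruct (Req_dec t T) as [->|HtT]; [exact Hterm|].
  assert (Hgap : solution_gap tau t = solution_gap tau T).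
  { apply eq_of_is_derive_0; [lra | apply continuous_R_solution_gap_clamp; lra|].
    intros s Hs; apply is_derive_solution_gap; lra. }
  unfold solution_gap in Hgap. rewrite Hterm, Rminus_diag, Rmult_0_r in Hgap.
  apply Rmult_integral in Hgap as [Hexp | Hdiff]; [|lra].
  exfalso; exact (Rgt_not_eq _ _ (exp_pos _) Hexp).
Qed.

Lemma diag_map_diagonal : diag_map (diagonal Lam) = diagonal Lam.
Proof.
  apply functional_extensionality; intros x. unfold diag_map.
  rewrite <- solution_eq_slice_sol; [unfold diagonal; ring|].
  assert (Hx := clamp_in 0 T ltac:(lra) x); unfold sol_domain; simpl; lra.
Qed.

End GivenSolution.

Theorem riccati_exists_unique B : 0 < k -> 0 <= B -> 4 * B <= k ->
  q / 2 + (c / 2 * Lm + Lm * source_bound B / k) <= B -> slice_lip_const B / k <= / 2 ->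
  exists Lam, is_solution T q eta c k lam Lam /\
    forall Lam', is_solution T q eta c k lam Lam' ->
      forall tau t, sol_domain T (tau, t) -> Lam' tau t = Lam tau t.
Proof.
  intros Hk HB HkB Hball Hlip.
  destruct (diag_map_fixed_point B Hk HB HkB Hball Hlip) as [u [[Hu _] Hfix]].
  exists (slice_sol u). split; [apply slice_sol_is_solution; auto|].
  intros Lam' Hsol tau t Hdom. rewrite (solution_eq_slice_sol Lam' Hsol tau t Hdom).
  rewrite (diag_map_fixed_point_unique (diagonal Lam') u); auto; [lra | |].
  - apply continuous_R_diagonal, Hsol.
  - apply diag_map_diagonal, Hsol.
Qed.

(* [threshold] is the constant [C] of the statement. *)
Definition ball_radius : R := q / 2 + c / 2 * Lm + 1.

Definition threshold : R :=
  4 * ball_radius + Lm * source_bound ball_radius + 2 * slice_lip_const ball_radius + 1.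

Lemma threshold_bounds : 0 <= ball_radius /\ 0 <= Lm * source_bound ball_radius /\
  0 <= slice_lip_const ball_radius.
Proof.
  assert (HLm := Lm_nonneg).
  assert (HB : 0 <= ball_radius) by (unfold ball_radius; nra).
  assert (HFb := source_bound_nonneg _ HB). assert (HFL := source_lip_nonneg _ HB).
  split; [exact HB | split; [nra|]]. unfold slice_lip_const.
  assert (0 <= T * Lm * source_bound ball_radius) by (apply Rmult_le_pos; nra). nra.
Qed.

Theorem riccati_exists_unique_above_threshold : threshold <= k ->
  exists Lam, is_solution T q eta c k lam Lam /\
    forall Lam', is_solution T q eta c k lam Lam' ->
      forall tau t, sol_domain T (tau, t) -> Lam' tau t = Lam tau t.
Proof.
  unfold threshold; intros Hk. destruct threshold_bounds as [HB [HFb HS]].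
  apply (riccati_exists_unique ball_radius); try lra.
  - assert (Lm * source_bound ball_radius / k <= 1).
    { apply (Rmult_le_reg_r k); [lra|]. unfold Rdiv.
      rewrite Rmult_assoc, Rinv_l, Rmult_1_r by lra. lra. }
    assert (Hr : ball_radius = q / 2 + c / 2 * Lm + 1) by reflexivity. lra.
  - apply (Rmult_le_reg_l k); [lra|]. field_simplify; lra.
Qed.

End Riccati.

Theorem lemma4p1 (T q eta c : R) (lam : R -> R) :
  0 < T -> 0 < q -> 0 < eta -> 0 < c ->
  (forall x, 0 <= x <= T -> 0 < lam x) ->
  (forall x y, 0 <= x -> x <= y -> y <= T -> lam x <= lam y) ->
  C1_on lam 0 T ->
  lam 0 = 1 ->
  exists C : R, 0 < C /\
    forall k : R, 0 <= k -> Rmax (4 * C ^ 2) 1 < k ->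
      exists Lam : R -> R -> R,
        is_solution T q eta c k lam Lam /\
        forall Lam' : R -> R -> R, is_solution T q eta c k lam Lam' ->
          forall tau t, sol_domain T (pair tau t) -> Lam' tau t = Lam tau t.
Proof.
  intros HT Hq Heta Hc Hpos Hmono [lam' [Hcont _]] _.
  set (l x := lam (clamp 0 T x)).
  assert (Hl : continuous_R l) by (apply continuous_R_clamp_comp; [lra | exact Hcont]).
  assert (Hrange : forall x, 0 <= l x <= lam T).
  { intros x. assert (Hx := clamp_in 0 T ltac:(lra) x). unfold l.
    split; [left; apply Hpos | apply Hmono]; lra. }
  assert (Hlam : forall x, 0 <= x <= T -> l x = lam x) by (intros; unfold l; rewrite clamp_id; lra).
  set (C := threshold T q eta c (lam T)).
  assert (HC : 1 <= C).
  { destruct (threshold_bounds T q eta c l (lam T) HT Hq Heta Hc Hrange) as [? [? ?]].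
    unfold C, threshold. lra. }
  exists C. split; [lra|]. intros k _ Hk.
  apply (riccati_exists_unique_above_threshold T q eta c k l (lam T) HT Hq Heta Hc Hl Hrange lam Hlam).
  assert (C <= 4 * C ^ 2) by nra. assert (Hmax := Rmax_l (4 * C ^ 2) 1). fold C. lra.
Qed.
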